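(* Let $k,n$ be positive integers with $n\geq2$ and $k\leq\lfloor n/2\rfloor$, and let $Z=(z_{\ell,r,s})\in\mathbb{C}^{\{1,\dots,k\}\times\{1,\dots,n\}\times\{1,\dots,n\}}$. Define $$\mathrm{gnhaf}(Z)=\frac{(n-2k)!}{n!}\sum_{r}\prod_{\ell=1}^k z_{\ell,r(2\ell-1),r(2\ell)},$$ where the sum runs over all injective maps $r:\{1,\dots,2k\}\to\{1,\dots,n\}$. Then $$|\mathrm{gnhaf}(Z)|\leq\prod_{\ell=1}^k\Big(\frac{1}{n(n-1)}\sum_{(r,s)}\Big|\tfrac12(z_{\ell,r,s}+z_{\ell,s,r})\Big|^2\Big)^{1/2}\leq\prod_{\ell=1}^k\Big(\frac{1}{n(n-1)}\sum_{(r,s)}|z_{\ell,r,s}|^2\Big)^{1/2},$$ where the sums run over ordered pairs $(r,s)$ of distinct elements of $\{1,\dots,n\}$. *)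

(* Complex numbers: an arbitrary numClosedFieldType C
   (e.g. algC, or complex R for R : realType). *)
From mathcomp Require Import all_boot all_order all_algebra.
From mathcomp Require Import zify.
Set Implicit Arguments. Unset Strict Implicit. Unset Printing Implicit Defensive.
Import Order.TTheory GRing.Theory Num.Theory.
Local Open Scope ring_scope.

(* 0-based indices: the informal pair (2l-1, 2l) for l = 1..k becomes
   (2l, 2l+1) for l : 'I_k, as elements of 'I_(2*k). *)
Lemma pair_fst_lt k (l : 'I_k) : (2 * l < 2 * k)%N.
Proof. by rewrite ltn_pmul2l. Qed.

Lemma pair_snd_lt k (l : 'I_k) : (2 * l + 1 < 2 * k)%N.
Proof.
have := ltn_ord l; lia.
Qed.

Definition pair_fst k (l : 'I_k) : 'I_(2 * k) := Ordinal (pair_fst_lt l).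
Definition pair_snd k (l : 'I_k) : 'I_(2 * k) := Ordinal (pair_snd_lt l).

Definition gnhaf (C : numClosedFieldType) (k n : nat)
    (Z : 'I_k -> 'I_n -> 'I_n -> C) : C :=
  ((n - 2 * k)`!)%:R / (n`!)%:R *
  \sum_(r : {ffun 'I_(2 * k) -> 'I_n} | injectiveb r)
     \prod_(l < k) Z l (r (pair_fst l)) (r (pair_snd l)).

From mathcomp Require Import all_boot all_order all_algebra.
From mathcomp Require Import perm zify ring.
Set Implicit Arguments. Unset Strict Implicit. Unset Printing Implicit Defensive.
Import Order.TTheory GRing.Theory Num.Theory.
Local Open Scope ring_scope.

(* Symmetrisation first: relabelling the maps r by the transposition of the
   two slots of a pair permutes the injective maps, so gnhaf does not change
   when z_l is replaced by (z_l + z_l^T)/2.  Then, for f_l = |z_l| >= 0, the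
   sum of prod_l f_l(r(2l-1), r(2l)) over the maps r sending a set J of free
   slots injectively into A (the other slots being frozen) is at most
   |A|^_|J| prod_l sqrt(nu_l), where nu_l is the mean square of f_l over the
   free slots of pair l.  This goes by induction on |A|: removing a value u
   from A splits the sum according to which free slot, if any, is sent to u.
   Each pair then provides an [admissible] quadruple; admissibility is stable
   under products, and for the total share s = |J|/|A| it gives
   (1 - s) X + D <= sqrt V, which is exactly the induction step.  The second
   inequality is |(x + y)/2|^2 <= (|x|^2 + |y|^2)/2 summed over ordered pairs. *)

Section Admissible.
Variable R : numDomainType.
Implicit Types s X D V : R.

(* In the induction step [s] is the share of free slots of a pair among the
   values of the range, [X] the norm of the pair once a value u is removed from
   the range, [D] the contribution of its slots sent to u, and [V] its mean
   square over the whole range. *)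
Definition admissible s X D V := [/\ 0 <= X, 0 <= D, 0 <= V,
  D ^+ 2 + s * (1 - s) * X ^+ 2 <= s * V & (1 - s) * X ^+ 2 <= V].

Local Ltac solve_real := repeat first
  [ apply: rpredB | apply: rpredD | apply: rpredM | apply: rpred1
  | apply: ger0_real; assumption ].

Lemma admissible0_defectM s X1 X2 D1 D2 V1 V2 : 0 <= s -> s <= 1 ->
  admissible 0 X1 D1 V1 -> admissible s X2 D2 V2 ->
  (D1 * X2 + D2 * X1) ^+ 2 + s * (1 - s) * (X1 * X2) ^+ 2 <= s * (V1 * V2).
Proof.
move=> s_ge0 s_le1 [X1_ge0 D1_ge0 V1_ge0 defect1 slack1] [X2_ge0 D2_ge0 _ defect2 _].
rewrite !mul0r addr0 in defect1; rewrite subr0 mul1r in slack1.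
have -> : D1 = 0 by apply/eqP; rewrite -sqrf_eq0 eq_le defect1 -realEsqr; solve_real.
have -> : (0 * X2 + D2 * X1) ^+ 2 + s * (1 - s) * (X1 * X2) ^+ 2
   = X1 ^+ 2 * (D2 ^+ 2 + s * (1 - s) * X2 ^+ 2) by ring.
by rewrite [s * (V1 * V2)]mulrCA ler_pM ?exprn_ge0 ?addr_ge0 ?mulr_ge0 ?subr_ge0.
Qed.

Lemma admissible_defectM s1 s2 X1 X2 D1 D2 V1 V2 : 0 < s1 -> 0 < s2 -> s1 + s2 <= 1 ->
  admissible s1 X1 D1 V1 -> admissible s2 X2 D2 V2 ->
  (D1 * X2 + D2 * X1) ^+ 2 + (s1 + s2) * (1 - (s1 + s2)) * (X1 * X2) ^+ 2
  <= (s1 + s2) * (V1 * V2).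
Proof.
move=> s1_gt0 s2_gt0 s12_le1 [X1_ge0 D1_ge0 V1_ge0 defect1 _] [X2_ge0 D2_ge0 V2_ge0 defect2 _].
have s1_ge0 := ltW s1_gt0; have s2_ge0 := ltW s2_gt0.
have s1_le1 : s1 <= 1 by apply: le_trans s12_le1; rewrite lerDl.
rewrite -subr_ge0 -(pmulr_rge0 _ s1_gt0) -(pmulr_rge0 _ s2_gt0).
set c1 := D1 ^+ 2 + s1 * (1 - s1) * X1 ^+ 2 in defect1 *.
set c2 := D2 ^+ 2 + s2 * (1 - s2) * X2 ^+ 2 in defect2 *.
have -> : s2 * (s1 * ((s1 + s2) * (V1 * V2) - ((D1 * X2 + D2 * X1) ^+ 2
        + (s1 + s2) * (1 - (s1 + s2)) * (X1 * X2) ^+ 2)))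
      = (s1 + s2) * (s2 * V2) * (s1 * V1 - c1) + (s1 + s2) * c1 * (s2 * V2 - c2)
      + (1 - (s1 + s2)) * (s2 * D1 * X2 - s1 * X1 * D2) ^+ 2
      + (s1 + s2) * (D1 * D2 - s1 * s2 * X1 * X2) ^+ 2.
  by rewrite /c1 /c2; ring.
have c1_ge0 : 0 <= c1 by rewrite addr_ge0 ?mulr_ge0 ?exprn_ge0 ?subr_ge0.
have sq1 : 0 <= (s2 * D1 * X2 - s1 * X1 * D2) ^+ 2 by rewrite -realEsqr; solve_real.
have sq2 : 0 <= (D1 * D2 - s1 * s2 * X1 * X2) ^+ 2 by rewrite -realEsqr; solve_real.
rewrite !addr_ge0 //.
- by rewrite mulr_ge0 ?subr_ge0 // !mulr_ge0 // addr_ge0.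
- by rewrite mulr_ge0 ?subr_ge0 // !mulr_ge0 // addr_ge0.
- by rewrite mulr_ge0 ?subr_ge0.
- by rewrite mulr_ge0 ?addr_ge0.
Qed.

Lemma admissibleM s1 s2 X1 X2 D1 D2 V1 V2 : 0 <= s1 -> 0 <= s2 -> s1 + s2 <= 1 ->
  admissible s1 X1 D1 V1 -> admissible s2 X2 D2 V2 ->
  admissible (s1 + s2) (X1 * X2) (D1 * X2 + D2 * X1) (V1 * V2).
Proof.
move=> s1_ge0 s2_ge0 s12_le1 adm1 adm2.
have s1_le1 : s1 <= 1 by apply: le_trans s12_le1; rewrite lerDl.
have s2_le1 : s2 <= 1 by apply: le_trans s12_le1; rewrite lerDr.
case: (adm1) => X1_ge0 D1_ge0 V1_ge0 _ slack1; case: (adm2) => X2_ge0 D2_ge0 V2_ge0 _ slack2.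
split; rewrite ?mulr_ge0 ?addr_ge0 ?mulr_ge0 //.
- have [s1_0|s1_neq0] := eqVneq s1 0.
    move: adm1; rewrite s1_0 add0r => adm1.
    exact: admissible0_defectM s2_ge0 s2_le1 adm1 adm2.
  have [s2_0|s2_neq0] := eqVneq s2 0.
    move: adm2; rewrite s2_0 addr0 [D1 * X2 + _]addrC (mulrC X1) (mulrC V1) => adm2.
    exact: admissible0_defectM s1_ge0 s1_le1 adm2 adm1.
  by apply: admissible_defectM; rewrite ?lt_def ?s1_neq0 ?s2_neq0.
- apply: le_trans (_ : (1 - s1) * X1 ^+ 2 * ((1 - s2) * X2 ^+ 2) <= _);
    last by rewrite ler_pM ?mulr_ge0 ?exprn_ge0 ?subr_ge0.
  have -> : (1 - s1) * X1 ^+ 2 * ((1 - s2) * X2 ^+ 2)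
     = ((1 - (s1 + s2)) + s1 * s2) * (X1 * X2) ^+ 2 by ring.
  by rewrite ler_wpM2r ?exprn_ge0 ?mulr_ge0 // lerDl mulr_ge0.
Qed.

Lemma admissible_big (I : eqType) (r : seq I) (s X D V : I -> R) : uniq r ->
  (forall i, 0 <= s i) -> \sum_(i <- r) s i <= 1 ->
  (forall i, admissible (s i) (X i) (D i) (V i)) ->
  admissible (\sum_(i <- r) s i) (\prod_(i <- r) X i)
    (\sum_(i <- r) D i * \prod_(j <- r | j != i) X j) (\prod_(i <- r) V i).
Proof.
move=> + s_ge0 + adm; elim: r => [|i r IHr] /=.
  move=> _ _; rewrite !big_nil.
  by split; rewrite ?ler01 ?expr0n ?mul0r ?subr0 ?mul1r ?expr1n ?add0r.
case/andP=> i_notin_r r_uniq; rewrite !big_cons eqxx => sum_le1.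
have sum_r_le1 : \sum_(j <- r) s j <= 1 by apply: le_trans sum_le1; rewrite lerDr.
have -> : \prod_(j <- r | j != i) X j = \prod_(j <- r) X j.
  rewrite big_seq_cond [RHS]big_seq; apply: eq_bigl => j.
  by have [->|_] := eqVneq j i; rewrite ?andbF ?andbT ?(negbTE i_notin_r).
have -> : \sum_(j <- r) D j * \prod_(j' <- i :: r | j' != j) X j'
        = (\sum_(j <- r) D j * \prod_(j' <- r | j' != j) X j') * X i.
  rewrite mulr_suml big_seq [RHS]big_seq; apply: eq_bigr => j j_in_r.
  have ij : i != j by apply: contraNneq i_notin_r => ->.
  by rewrite big_cons ij mulrAC mulrA.
exact: admissibleM (s_ge0 i) (sumr_ge0 _ (fun j _ => s_ge0 j)) sum_le1 (adm i)
  (IHr r_uniq sum_r_le1).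
Qed.

Lemma admissible_sqr_le s X D V : 0 < s -> s <= 1 -> admissible s X D V ->
  ((1 - s) * X + D) ^+ 2 <= V.
Proof.
move=> s_gt0 s_le1 [X_ge0 D_ge0 _ defect _].
rewrite -(ler_pM2l s_gt0); apply: le_trans defect.
rewrite -subr_ge0.
have -> : D ^+ 2 + s * (1 - s) * X ^+ 2 - s * ((1 - s) * X + D) ^+ 2
   = (1 - s) * (D - s * X) ^+ 2 by ring.
have s_ge0 := ltW s_gt0.
by rewrite mulr_ge0 ?subr_ge0 // -realEsqr; solve_real.
Qed.

End Admissible.

Lemma admissible_le_sqrtC (C : numClosedFieldType) (s X D V : C) :
  0 < s -> s <= 1 -> admissible s X D V -> (1 - s) * X + D <= sqrtC V.
Proof.
move=> s_gt0 s_le1 adm; have [X_ge0 D_ge0 V_ge0 _ _] := adm.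
have lhs_ge0 : 0 <= (1 - s) * X + D by rewrite addr_ge0 ?mulr_ge0 ?subr_ge0.
by rewrite -[_ + D]sqrCK // ler_sqrtC ?qualifE /= ?exprn_ge0 // admissible_sqr_le.
Qed.

Section AdmissibleSteps.
Variable R : numFieldType.

Lemma admissible_mean_step (x X q V : R) : 0 <= x -> 0 <= X -> 0 <= q ->
  (x + 1) * V = x * X ^+ 2 + q ^+ 2 -> admissible (x + 1)^-1 X (q / (x + 1)) V.
Proof.
move=> x_ge0 X_ge0 q_ge0 eqV.
have x1_gt0 : 0 < x + 1 by rewrite ltr_wpDl.
have x1_neq0 := lt0r_neq0 x1_gt0; have x1_ge0 := ltW x1_gt0.
have {eqV}-> : V = (x * X ^+ 2 + q ^+ 2) / (x + 1) by rewrite -eqV mulrC mulKf.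
split; rewrite ?divr_ge0 ?addr_ge0 ?mulr_ge0 ?exprn_ge0 //.
  by rewrite -subr_ge0 (_ : _ - _ = 0) //; field.
rewrite -subr_ge0 (_ : _ - _ = q ^+ 2 / (x + 1)); last by field.
by rewrite divr_ge0 ?exprn_ge0.
Qed.

Lemma admissible_offdiag_step (x X q1 q2 V : R) :
  0 <= x -> 0 <= X -> 0 <= q1 -> 0 <= q2 ->
  (x + 2) * V = x * X ^+ 2 + q1 ^+ 2 + q2 ^+ 2 ->
  admissible (2 / (x + 2)) X ((q1 + q2) / (x + 2)) V.
Proof.
move=> x_ge0 X_ge0 q1_ge0 q2_ge0 eqV.
have x2_gt0 : 0 < x + 2 by rewrite ltr_wpDl.
have x2_neq0 := lt0r_neq0 x2_gt0; have x2_ge0 := ltW x2_gt0.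
have {eqV}-> : V = (x * X ^+ 2 + q1 ^+ 2 + q2 ^+ 2) / (x + 2) by rewrite -eqV mulrC mulKf.
split; rewrite ?divr_ge0 ?addr_ge0 ?mulr_ge0 ?exprn_ge0 //.
  rewrite -subr_ge0 (_ : _ - _ = (q1 - q2) ^+ 2 / (x + 2) ^+ 2); last by field.
  have sq : 0 <= (q1 - q2) ^+ 2 by rewrite -realEsqr rpredB ?ger0_real.
  by rewrite divr_ge0 // exprn_ge0.
rewrite -subr_ge0 (_ : _ - _ = (q1 ^+ 2 + q2 ^+ 2) / (x + 2)); last by field.
by rewrite divr_ge0 ?addr_ge0 ?exprn_ge0.
Qed.

End AdmissibleSteps.

Section MeanSquares.
Variables (R : numFieldType) (T : finType).
Implicit Types (A : {set T}) (h : T -> R) (g : T -> T -> R).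

Definition mean_sq A h := #|A|%:R^-1 * \sum_(v in A) h v ^+ 2.

Definition offdiag_mean_sq A g :=
  (#|A| * (#|A| - 1))%:R^-1 * \sum_(v in A) \sum_(w in A | w != v) g v w ^+ 2.

Lemma mean_sq_ge0 A h : (forall v, 0 <= h v) -> 0 <= mean_sq A h.
Proof.
by move=> h_ge0; rewrite mulr_ge0 ?invr_ge0 ?ler0n ?sumr_ge0 // => v _; rewrite exprn_ge0.
Qed.

Lemma offdiag_mean_sq_ge0 A g : (forall v w, 0 <= g v w) -> 0 <= offdiag_mean_sq A g.
Proof.
move=> g_ge0; rewrite mulr_ge0 ?invr_ge0 ?ler0n ?sumr_ge0 // => v _.
by rewrite sumr_ge0 // => w _; rewrite exprn_ge0.
Qed.

Lemma card_mean_sq A h : #|A|%:R * mean_sq A h = \sum_(v in A) h v ^+ 2.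
Proof.
rewrite /mean_sq mulrA; have [/cards0_eq ->|A_neq0] := eqVneq #|A| 0%N.
  by rewrite big_set0 mulr0.
by rewrite mulfV ?mul1r // pnatr_eq0.
Qed.

Lemma card_offdiag_mean_sq A g : (#|A| * (#|A| - 1))%:R * offdiag_mean_sq A g
  = \sum_(v in A) \sum_(w in A | w != v) g v w ^+ 2.
Proof.
rewrite /offdiag_mean_sq mulrA; have [A_le1|A_gt1] := leqP #|A| 1; last first.
  by rewrite mulfV ?mul1r // pnatr_eq0 muln_eq0 negb_or -!lt0n subn_gt0 A_gt1 ltnW.
have /eqP-> : (#|A| - 1 == 0)%N by rewrite subn_eq0.
rewrite muln0 !mul0r big1 // => v vA; rewrite big1 // => w /andP[wA].
by rewrite (card_le1_eqP A_le1 w v wA vA) eqxx.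
Qed.

Lemma offdiag_mean_sqT g : offdiag_mean_sq [set: T] g
  = (#|T| * (#|T| - 1))%:R^-1 * \sum_v \sum_(w | w != v) g v w ^+ 2.
Proof.
rewrite /offdiag_mean_sq cardsT; congr (_ * _).
by apply: eq_big => [v|v _]; rewrite ?inE //; apply: eq_bigl => w; rewrite inE.
Qed.

Lemma mean_sq_setD1 A h u : u \in A ->
  #|A|%:R * mean_sq A h = #|A :\ u|%:R * mean_sq (A :\ u) h + h u ^+ 2.
Proof.
move=> uA; rewrite !card_mean_sq (bigD1 u) //= addrC.
by congr (_ + _); apply: eq_bigl => v; rewrite in_setD1 andbC.
Qed.

Lemma offdiag_mean_sq_setD1 A g u : u \in A ->
  (#|A| * (#|A| - 1))%:R * offdiag_mean_sq A g
  = (#|A :\ u| * (#|A :\ u| - 1))%:R * offdiag_mean_sq (A :\ u) g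
    + #|A :\ u|%:R * (mean_sq (A :\ u) (g u) + mean_sq (A :\ u) (fun v => g v u)).
Proof.
move=> uA; rewrite mulrDr !card_offdiag_mean_sq !card_mean_sq (bigD1 u) //= addrA.
rewrite [RHS]addrAC [RHS]addrC; congr (_ + _).
  by apply: eq_bigl => w; rewrite in_setD1 andbC.
rewrite -big_split /=; apply: eq_big => [v|v]; first by rewrite in_setD1 andbC.
case/andP=> vA vu; rewrite (bigD1 u) /=; last by rewrite uA eq_sym.
rewrite addrC; congr (_ + _); apply: eq_bigl => w.
by rewrite in_setD1 andbC andbA.
Qed.

End MeanSquares.

Section AdmissibleMeanSquares.
Variables (C : numClosedFieldType) (T : finType).
Implicit Types (A : {set T}) (h : T -> C) (g : T -> T -> C).

Lemma admissible_mean_sq A h u : (forall v, 0 <= h v) -> u \in A ->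
  admissible #|A|%:R^-1 (sqrtC (mean_sq (A :\ u) h)) (h u / #|A|%:R) (mean_sq A h).
Proof.
move=> h_ge0 uA; have cardA : #|A| = #|A :\ u|.+1 by rewrite (cardsD1 u A) uA.
have := mean_sq_setD1 h uA; rewrite cardA -addn1 natrD => eqV.
by apply: admissible_mean_step; rewrite ?sqrtC_ge0 ?mean_sq_ge0 ?ler0n ?h_ge0 ?sqrtCK.
Qed.

Lemma admissible_offdiag_mean_sq A g u : (forall v w, 0 <= g v w) -> u \in A ->
  (2 <= #|A|)%N ->
  admissible (2 / #|A|%:R) (sqrtC (offdiag_mean_sq (A :\ u) g))
    ((sqrtC (mean_sq (A :\ u) (g u)) + sqrtC (mean_sq (A :\ u) (fun v => g v u)))
       / #|A|%:R)
    (offdiag_mean_sq A g).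
Proof.
move=> g_ge0 uA; have := offdiag_mean_sq_setD1 g uA.
rewrite (cardsD1 u A) uA add1n ltnS; case: #|A :\ u| => [//|c] eqV _.
have e1 : c.+1%:R = c%:R + 1 :> C by rewrite -addn1 natrD.
have e2 : c.+2%:R = c%:R + 2 :> C by rewrite -addn2 natrD.
rewrite !subn1 /= !natrM e1 e2 in eqV *.
have x1_neq0 : c%:R + 1 != 0 :> C by rewrite lt0r_neq0 // ltr_wpDl.
apply: admissible_offdiag_step;
  rewrite ?ler0n ?sqrtC_ge0 ?mean_sq_ge0 ?offdiag_mean_sq_ge0 // !sqrtCK.
by apply: (mulfI x1_neq0); rewrite mulrA [(_ + 1) * _]mulrC eqV; ring.
Qed.

End AdmissibleMeanSquares.

Section InjectiveExtensions.
Variables (I T : finType) (V : nmodType) (F : {ffun I -> T} -> V).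
Implicit Types (A : {set T}) (J : {set I}) (rho r : {ffun I -> T}).

Definition inj_extension A J rho r :=
  [&& [forall i, (i \notin J) ==> (r i == rho i)],
      [forall i in J, r i \in A] &
      [forall i in J, forall j in J, (r i == r j) ==> (i == j)]].

Definition ffun_upd rho i t : {ffun I -> T} := [ffun j => if j == i then t else rho j].

Definition ext_sum A J rho := \sum_(r | inj_extension A J rho r) F r.

Lemma inj_extensionP A J rho r : reflect
  [/\ {in [predC J], r =1 rho}, {in J, forall i, r i \in A} & {in J &, injective r}]
  (inj_extension A J rho r).
Proof.
apply: (iffP and3P) => [[/forallP off /forall_inP inA /forall_inP inj]|[off inA inj]].
  split=> [i /= i_notin_J|//|i j iJ jJ rij]; first by apply/eqP; rewrite (implyP (off i)).
  by apply/eqP; rewrite (implyP (forall_inP (inj i iJ) j jJ)) ?rij.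
split; first by apply/forallP => i; apply/implyP => i_notin_J; rewrite off.
  by apply/forall_inP.
apply/forall_inP => i iJ; apply/forall_inP => j jJ.
by apply/implyP => /eqP/inj; rewrite iJ jJ => /(_ isT isT) ->.
Qed.

Lemma inj_extension_setD1 A J rho r u :
  inj_extension (A :\ u) J rho r = inj_extension A J rho r && ~~ [exists i in J, r i == u].
Proof.
rewrite negb_exists_in; apply/inj_extensionP/andP => [[off inA inj]|].
  split; first by apply/inj_extensionP; split=> // i /inA; rewrite in_setD1 => /andP[].
  by apply/forall_inP => i /inA; rewrite in_setD1 => /andP[].
case=> /inj_extensionP[off inA inj] /forall_inP ne_u.
by split=> // i iJ; rewrite in_setD1 ne_u ?inA.
Qed.

Lemma inj_extension_upd A J rho r u i : u \in A -> i \in J ->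
  inj_extension (A :\ u) (J :\ i) (ffun_upd rho i u) r
  = inj_extension A J rho r && (r i == u).
Proof.
move=> uA iJ; apply/inj_extensionP/andP => [[off inA inj]|].
  have riu : r i = u by rewrite off ?ffunE ?eqxx // !inE eqxx.
  split; last by rewrite riu.
  apply/inj_extensionP; split.
  - move=> j; rewrite inE => j_notin_J.
    have ji : j != i by apply: contraNneq j_notin_J => ->.
    by rewrite off ?ffunE ?(negbTE ji) // !inE negb_and j_notin_J orbT.
  - move=> j jJ; have [-> |ji] := eqVneq j i; first by rewrite riu.
    by have := inA j; rewrite !inE ji jJ => /(_ isT) /andP[].
  move=> j j' jJ j'J; have [-> |ji] := eqVneq j i; have [-> |j'i] := eqVneq j' i => //.
  - by move=> rij'; have := inA j'; rewrite !inE j'i j'J -rij' riu eqxx => /(_ isT).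
  - by move=> rji; have := inA j; rewrite !inE ji jJ rji riu eqxx => /(_ isT).
  by apply: inj; rewrite !inE ?ji ?j'i.
case=> /inj_extensionP[off inA inj] /eqP riu; split.
- move=> j; rewrite !inE negb_and negbK ffunE => /orP[/eqP ->|j_notin_J].
    by rewrite eqxx.
  have ji : j != i by apply: contraNneq j_notin_J => ->.
  by rewrite (negbTE ji) off // inE.
- move=> j; rewrite !inE => /andP[ji jJ]; rewrite inA // andbT.
  by apply: contra ji => /eqP rju; apply/eqP/inj; rewrite ?riu.
by move=> j j'; rewrite !inE => /andP[_ jJ] /andP[_ j'J]; apply: inj.
Qed.

Lemma ext_sum_split A J rho u : u \in A ->
  ext_sum A J rho
  = ext_sum (A :\ u) J rho + \sum_(i in J) ext_sum (A :\ u) (J :\ i) (ffun_upd rho i u).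
Proof.
move=> uA; rewrite /ext_sum (bigID (fun r => [exists i in J, r i == u])) /= addrC.
congr (_ + _); first by apply: eq_bigl => r; rewrite inj_extension_setD1.
under [RHS]eq_bigr => i iJ do
  rewrite /ext_sum (eq_bigl _ _ (fun r => inj_extension_upd rho r uA iJ)) big_mkcond.
rewrite exchange_big [LHS]big_mkcond /=; apply: eq_bigr => r _.
have [ext_r|] /= := boolP (inj_extension A J rho r); last by rewrite big1.
have [/exists_inP[i0 i0J /eqP ri0]|] := boolP [exists i in J, r i == u].
  rewrite (bigD1 i0) //= ri0 eqxx big1 ?addr0 // => i /andP[iJ ii0].
  case: eqP => // riu; have /inj_extensionP[_ _ inj] := ext_r.
  by move: ii0; rewrite (inj i i0) ?eqxx // riu.
rewrite negb_exists_in => /forall_inP ne_u; rewrite big1 // => i iJ.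
by rewrite (negbTE (ne_u i iJ)).
Qed.

Lemma ext_sum_eq0 A J rho : (#|A| < #|J|)%N -> ext_sum A J rho = 0.
Proof.
move=> A_lt_J; rewrite /ext_sum big_pred0 // => r.
apply: contraTF A_lt_J => /inj_extensionP[_ inA inj]; rewrite -leqNgt.
rewrite -(card_in_imset inj); apply/subset_leq_card/subsetP => _ /imsetP[i iJ ->].
exact: inA.
Qed.

Lemma ext_sum_set0 A rho : ext_sum A set0 rho = F rho.
Proof.
rewrite /ext_sum (big_pred1 rho) // => r /=; apply/inj_extensionP/eqP.
  by case=> off _ _; apply/ffunP => i; rewrite off ?inE.
by move=> ->; split=> // i; rewrite inE.
Qed.

Lemma inj_extension_setT rho r : inj_extension [set: T] [set: I] rho r = injectiveb r.
Proof.
apply/inj_extensionP/injectiveP => [[_ _ inj] i j|inj]; first exact: inj.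
by split=> [i|i|i j _ _]; rewrite ?inE //; apply: inj.
Qed.

End InjectiveExtensions.

Section PairSlots.
Variable k : nat.
Local Notation m := (2 * k)%N.
Implicit Types (l : 'I_k) (i : 'I_m).

Lemma pair_of_subproof (i : 'I_m) : (i %/ 2 < k)%N.
Proof. by have := ltn_ord i; lia. Qed.

Definition pair_of (i : 'I_m) : 'I_k := Ordinal (pair_of_subproof i).

Lemma pair_of_fst l : pair_of (pair_fst l) = l.
Proof. by apply: val_inj => /=; lia. Qed.

Lemma pair_of_snd l : pair_of (pair_snd l) = l.
Proof. by apply: val_inj => /=; lia. Qed.

Lemma pair_fst_neq_snd l : pair_fst l != pair_snd l.
Proof. by apply/eqP => /(congr1 val) /=; lia. Qed.

Lemma pair_of_eq i l : (pair_of i == l) = (i == pair_fst l) || (i == pair_snd l).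
Proof.
apply/eqP/orP => [/(congr1 val) /= i_l|[] /eqP ->]; rewrite ?pair_of_fst ?pair_of_snd //.
have : (i = 2 * l :> nat \/ i = 2 * l + 1 :> nat)%N by lia.
by case=> ei; [left|right]; apply/eqP/val_inj.
Qed.

Lemma sum_pair_of (R : nmodType) (F : 'I_m -> R) l (J : {set 'I_m}) :
  \sum_(i in J | pair_of i == l) F i =
  (if pair_fst l \in J then F (pair_fst l) else 0) +
  (if pair_snd l \in J then F (pair_snd l) else 0).
Proof.
rewrite big_mkcondl /= (bigD1 (pair_fst l)) ?pair_of_fst //= (bigD1 (pair_snd l)) /=;
  last by rewrite pair_of_snd eqxx eq_sym pair_fst_neq_snd.
rewrite big1 ?addr0 // => i /andP[/andP[]]; rewrite pair_of_eq.
by case/orP=> /eqP-> ; rewrite eqxx.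
Qed.

End PairSlots.

Lemma natr_ffactS_div (R : numFieldType) (a j : nat) :
  (a.+1 ^_ j.+1)%:R / a.+1%:R = (a ^_ j)%:R :> R.
Proof. by rewrite ffactSS natrM mulrC mulKf ?pnatr_eq0. Qed.

Lemma natr_ffactS_mul1B (R : numFieldType) (a j : nat) : (j <= a)%N ->
  (a.+1 ^_ j.+1)%:R * (1 - j.+1%:R / a.+1%:R) = (a ^_ j.+1)%:R :> R.
Proof.
move=> j_le_a; have a1_neq0 : a.+1%:R != 0 :> R by rewrite pnatr_eq0.
have : (a.+1 ^_ j.+1)%:R * (a.+1 - j.+1)%:R = a.+1%:R * (a ^_ j.+1)%:R :> R.
  by rewrite -!natrM -ffactnSr ffactSS.
rewrite natrB // => eq_nat.
by apply: (mulfI a1_neq0); rewrite -eq_nat mulrCA mulrBr mulr1 mulrCA mulfV ?mulr1.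
Qed.

Lemma sqrtC_prod (C : numClosedFieldType) (I : Type) (r : seq I) (F : I -> C) :
  (forall i, 0 <= F i) -> sqrtC (\prod_(i <- r) F i) = \prod_(i <- r) sqrtC (F i).
Proof.
move=> F_ge0; elim: r => [|i r IHr]; first by rewrite !big_nil sqrtC1.
by rewrite !big_cons sqrtCM ?IHr // qualifE /= ?prodr_ge0.
Qed.

Section PairProductBound.
Variables (C : numClosedFieldType) (k : nat) (T : finType) (f : 'I_k -> T -> T -> C).
Hypothesis f_ge0 : forall l v w, 0 <= f l v w.
Local Notation m := (2 * k)%N.
Implicit Types (A : {set T}) (J : {set 'I_m}) (rho : {ffun 'I_m -> T}) (l : 'I_k).

Definition pair_prod (r : {ffun 'I_m -> T}) := \prod_l f l (r (pair_fst l)) (r (pair_snd l)).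

Definition pair_mean_sq l A J rho :=
  match pair_fst l \in J, pair_snd l \in J with
  | true, true => offdiag_mean_sq A (f l)
  | true, false => mean_sq A (fun v => f l v (rho (pair_snd l)))
  | false, true => mean_sq A (f l (rho (pair_fst l)))
  | false, false => f l (rho (pair_fst l)) (rho (pair_snd l)) ^+ 2
  end.

Definition pair_norm l A J rho := sqrtC (pair_mean_sq l A J rho).

Lemma pair_mean_sq_ge0 l A J rho : 0 <= pair_mean_sq l A J rho.
Proof.
by rewrite /pair_mean_sq; case: (_ \in J); case: (_ \in J);
  rewrite ?mean_sq_ge0 ?offdiag_mean_sq_ge0 ?exprn_ge0.
Qed.

Lemma pair_norm_ge0 l A J rho : 0 <= pair_norm l A J rho.
Proof. by rewrite sqrtC_ge0 pair_mean_sq_ge0. Qed.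

Lemma pair_norm_set0 l A rho :
  pair_norm l A set0 rho = f l (rho (pair_fst l)) (rho (pair_snd l)).
Proof. by rewrite /pair_norm /pair_mean_sq !inE sqrCK. Qed.

Lemma pair_mean_sq_upd l A J rho i u : pair_of i != l ->
  pair_mean_sq l A (J :\ i) (ffun_upd rho i u) = pair_mean_sq l A J rho.
Proof.
rewrite pair_of_eq negb_or => /andP[i_fst i_snd].
by rewrite /pair_mean_sq !in_setD1 !ffunE ![_ == i]eq_sym (negbTE i_fst) (negbTE i_snd).
Qed.

Lemma admissible_pair_mean_sq l A J rho u : u \in A -> (#|J| <= #|A|)%N ->
  admissible ((\sum_(i in J | pair_of i == l) 1) / #|A|%:R) (pair_norm l (A :\ u) J rho)
    ((\sum_(i in J | pair_of i == l) pair_norm l (A :\ u) (J :\ i) (ffun_upd rho i u))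
       / #|A|%:R)
    (pair_mean_sq l A J rho).
Proof.
move=> uA J_le_A; rewrite !sum_pair_of.
have fs := pair_fst_neq_snd l; have sf : pair_snd l != pair_fst l by rewrite eq_sym.
rewrite /pair_norm /pair_mean_sq !in_setD1 !eqxx (negbTE fs) (negbTE sf) /=.
rewrite !ffunE !eqxx (negbTE fs) (negbTE sf).
case: ifP => fJ; case: ifP => sJ.
- have A_ge2 : (2 <= #|A|)%N.
    have slots_sub_J : [set pair_fst l; pair_snd l] \subset J.
      by apply/subsetP => i; rewrite !inE => /orP[] /eqP ->.
    by apply: leq_trans J_le_A; apply: leq_trans (subset_leq_card slots_sub_J); rewrite cards2 fs.
  exact: admissible_offdiag_mean_sq.
- by rewrite !addr0 div1r sqrCK //; apply: admissible_mean_sq.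
- by rewrite !add0r div1r sqrCK //; apply: admissible_mean_sq.
rewrite !addr0 !mul0r sqrCK //.
by split; rewrite ?expr0n ?mul0r ?add0r ?subr0 ?mul1r ?exprn_ge0.
Qed.

Lemma sum_prod_pair_norm_upd A J rho u :
  \sum_(i in J) \prod_l pair_norm l A (J :\ i) (ffun_upd rho i u)
  = \sum_l (\sum_(i in J | pair_of i == l) pair_norm l A (J :\ i) (ffun_upd rho i u))
            * \prod_(l' | l' != l) pair_norm l' A J rho.
Proof.
rewrite (partition_big (@pair_of k) predT) //=; apply: eq_bigr => l _.
rewrite mulr_suml; apply: eq_bigr => i /andP[_ /eqP i_l].
rewrite (bigD1 l) //=; congr (_ * _); apply: eq_bigr => l' l'_neq_l.
by rewrite /pair_norm pair_mean_sq_upd // i_l eq_sym.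
Qed.

Lemma pair_norm_step A J rho u : u \in A -> (0 < #|J| <= #|A|)%N ->
  (1 - #|J|%:R / #|A|%:R) * \prod_l pair_norm l (A :\ u) J rho
  + (\sum_l (\sum_(i in J | pair_of i == l) pair_norm l (A :\ u) (J :\ i) (ffun_upd rho i u))
            * \prod_(l' | l' != l) pair_norm l' (A :\ u) J rho) / #|A|%:R
  <= \prod_l pair_norm l A J rho.
Proof.
move=> uA /andP[J_gt0 J_le_A]; have A_gt0 := leq_trans J_gt0 J_le_A.
pose s l : C := (\sum_(i in J | pair_of i == l) 1) / #|A|%:R.
have sum_s : \sum_l s l = #|J|%:R / #|A|%:R.
  by rewrite -mulr_suml -(partition_big (@pair_of k) predT) //= sumr_const.
have s_ge0 l : 0 <= s l by rewrite divr_ge0 ?sumr_ge0 ?ler0n.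
have sum_s_gt0 : 0 < \sum_l s l by rewrite sum_s divr_gt0 ?ltr0n.
have sum_s_le1 : \sum_l s l <= 1 by rewrite sum_s ler_pdivrMr ?ltr0n // mul1r ler_nat.
have := admissible_big (index_enum_uniq 'I_k) s_ge0 sum_s_le1
  (fun l => admissible_pair_mean_sq l rho uA J_le_A).
move/(admissible_le_sqrtC sum_s_gt0 sum_s_le1).
rewrite sqrtC_prod => [|l]; last exact: pair_mean_sq_ge0.
apply: le_trans; rewrite sum_s mulr_suml.
by under [X in _ + X <= _]eq_bigr do rewrite mulrAC.
Qed.

Lemma ext_sum_pair_prod_le_degenerate A J rho : (J == set0) || (#|A| < #|J|)%N ->
  ext_sum pair_prod A J rho <= (#|A| ^_ #|J|)%:R * \prod_l pair_norm l A J rho.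
Proof.
case/orP=> [/eqP->|A_lt_J].
  rewrite ext_sum_set0 cards0 ffactn0 mul1r.
  by under [X in _ <= X]eq_bigr do rewrite pair_norm_set0.
rewrite ext_sum_eq0 // mulr_ge0 ?ler0n ?prodr_ge0 // => l _.
exact: pair_norm_ge0.
Qed.

Lemma ext_sum_pair_prod_le A J rho :
  ext_sum pair_prod A J rho <= (#|A| ^_ #|J|)%:R * \prod_l pair_norm l A J rho.
Proof.
have [a] := ubnP #|A|; elim: a => // a IHa in A J rho *; rewrite ltnS => A_le_a.
have [|] := boolP ((J == set0) || (#|A| < #|J|)%N).
  exact: ext_sum_pair_prod_le_degenerate.
rewrite negb_or -leqNgt -card_gt0 => /andP[J_gt0 J_le_A].
have /card_gt0P[u uA] := leq_trans J_gt0 J_le_A.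
have cardA : #|A| = #|A :\ u|.+1 by rewrite (cardsD1 u) uA.
have IHB := IHa (A :\ u); rewrite -ltnS -cardA in IHB.
have := pair_norm_step rho uA (introT andP (conj J_gt0 J_le_A)).
move: J_gt0 J_le_A; rewrite (ext_sum_split _ _ _ uA) cardA; case cardJ: #|J| => [//|j] _.
rewrite ltnS => j_le_b.
set X := \prod_l pair_norm l (A :\ u) J rho.
set S := \sum_l _ * _ => step.
have IH1 : ext_sum pair_prod (A :\ u) J rho <= (#|A :\ u| ^_ j.+1)%:R * X.
  by rewrite -cardJ IHB.
have IH2 : \sum_(i in J) ext_sum pair_prod (A :\ u) (J :\ i) (ffun_upd rho i u)
           <= (#|A :\ u| ^_ j)%:R * S.
  rewrite /S -sum_prod_pair_norm_upd mulr_sumr; apply: ler_sum => i iJ.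
  have cardJi : #|J :\ i| = j by move: cardJ; rewrite (cardsD1 i) iJ => -[].
  by rewrite -cardJi IHB.
apply: le_trans (lerD IH1 IH2) _.
rewrite -(natr_ffactS_mul1B _ j_le_b) -(natr_ffactS_div _ _ j) -!mulrA -mulrDr.
by rewrite ler_wpM2l // [_^-1 * S]mulrC.
Qed.

Lemma ext_sum_pair_prod_setT_le rho :
  ext_sum pair_prod [set: T] [set: 'I_m] rho
  <= (#|T| ^_ m)%:R * \prod_l sqrtC (offdiag_mean_sq [set: T] (f l)).
Proof.
rewrite (le_trans (ext_sum_pair_prod_le _ _ _)) // !cardsT card_ord.
by under eq_bigr do rewrite /pair_norm /pair_mean_sq !inE.
Qed.

End PairProductBound.

Section Symmetrization.
Variables (R : numFieldType) (k : nat) (T : finType).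
Local Notation m := (2 * k)%N.
Implicit Types (Y : 'I_k -> T -> T -> R) (l : 'I_k).

Definition hafsum Y :=
  \sum_(r : {ffun 'I_m -> T} | injectiveb r) \prod_l Y l (r (pair_fst l)) (r (pair_snd l)).

Definition symmetrize (g : T -> T -> R) a b := (g a b + g b a) / 2.

Lemma eq_hafsum Y1 Y2 : (forall l a b, Y1 l a b = Y2 l a b) -> hafsum Y1 = hafsum Y2.
Proof. by move=> eqY; apply: eq_bigr => r _; apply: eq_bigr => l _; rewrite eqY. Qed.

Lemma hafsum_transpose Y l0 :
  hafsum Y = hafsum (fun l => if l == l0 then (fun a b => Y l b a) else Y l).
Proof.
pose s := tperm (pair_fst l0) (pair_snd l0).
pose h (r : {ffun 'I_m -> T}) : {ffun 'I_m -> T} := [ffun i => r (s i)].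
have hK : involutive h by move=> r; apply/ffunP => i; rewrite !ffunE tpermK.
rewrite /hafsum (reindex_inj (can_inj hK)); apply: eq_big => r /=.
  apply/injectiveP/injectiveP => r_inj i j; last by rewrite !ffunE => /r_inj /perm_inj.
  by move=> rij; apply: (@perm_inj _ s); apply: r_inj; rewrite !ffunE !tpermK.
move=> _; apply: eq_bigr => l _; rewrite !ffunE.
have [->|l_neq_l0] := eqVneq l l0; first by rewrite tpermL tpermR.
have slots_ne i : pair_of i = l -> (pair_fst l0 != i) && (pair_snd l0 != i).
  by move=> i_l; rewrite ![_ == i]eq_sym -negb_or -pair_of_eq i_l.
have /andP[f0_f f1_f] := slots_ne _ (pair_of_fst l).
have /andP[f0_s f1_s] := slots_ne _ (pair_of_snd l).
by rewrite !tpermD.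
Qed.

Lemma hafsum_symmetrize_at Y l0 :
  hafsum Y = hafsum (fun l => if l == l0 then symmetrize (Y l) else Y l).
Proof.
have split_l0 Y' r : (forall l, l != l0 -> Y' l = Y l) ->
    \prod_l Y' l (r (pair_fst l)) (r (pair_snd l))
    = Y' l0 (r (pair_fst l0)) (r (pair_snd l0))
      * \prod_(l | l != l0) Y l (r (pair_fst l)) (r (pair_snd l)).
  by move=> eqY'; rewrite (bigD1 l0) //=; congr (_ * _); apply: eq_bigr => l /eqY' ->.
have -> : hafsum (fun l => if l == l0 then symmetrize (Y l) else Y l)
          = (hafsum Y + hafsum Y) / 2.
  rewrite {2}(hafsum_transpose Y l0) /hafsum -big_split mulr_suml.
  apply: eq_bigr => r _.
  rewrite (split_l0 (fun l => if l == l0 then symmetrize (Y l) else Y l));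
    last by move=> l /negbTE ->.
  rewrite (split_l0 (fun l => if l == l0 then (fun a b => Y l b a) else Y l));
    last by move=> l /negbTE ->.
  by rewrite (split_l0 Y) // eqxx /symmetrize /= mulrAC mulrDl.
by field.
Qed.

Lemma hafsum_symmetrize Y : hafsum Y = hafsum (fun l => symmetrize (Y l)).
Proof.
suff sym_in : forall s : seq 'I_k,
    hafsum Y = hafsum (fun l => if l \in s then symmetrize (Y l) else Y l).
  by rewrite (sym_in (enum 'I_k)); apply: eq_hafsum => l a b; rewrite mem_enum.
elim=> [|l0 s IHs]; first by apply: eq_hafsum => l a b; rewrite in_nil.
rewrite IHs (hafsum_symmetrize_at _ l0); apply: eq_hafsum => l a b; rewrite in_cons.
have [-> /=|//] := eqVneq l l0; case: (l0 \in s) => //.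
by rewrite /symmetrize; field.
Qed.

End Symmetrization.

Lemma norm_hafsum_le (C : numClosedFieldType) (k : nat) (T : finType)
    (Y : 'I_k -> T -> T -> C) :
  `|hafsum Y| <= (#|T| ^_ (2 * k))%:R
                 * \prod_l sqrtC (offdiag_mean_sq [set: T] (fun v w => `|Y l v w|)).
Proof.
have [rho _|no_map] := pickP (fun _ : {ffun 'I_(2 * k) -> T} => true); last first.
  have -> : hafsum Y = 0 by apply: big_pred0 => r; have := no_map r.
  by rewrite normr0 mulr_ge0 ?ler0n ?prodr_ge0 // => l _; rewrite sqrtC_ge0 offdiag_mean_sq_ge0.
apply: le_trans (ext_sum_pair_prod_setT_le (fun l v w => normr_ge0 (Y l v w)) rho).
rewrite /ext_sum; under eq_bigl do rewrite inj_extension_setT.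
by apply: le_trans (ler_norm_sum _ _ _) _; apply: ler_sum => r _; rewrite normr_prod.
Qed.

Lemma norm_gnhaf_le (C : numClosedFieldType) (k n : nat) (Z : 'I_k -> 'I_n -> 'I_n -> C) :
  (2 * k <= n)%N ->
  `|gnhaf Z| <= \prod_l sqrtC ((n * (n - 1))%:R^-1 *
                  \sum_(r : 'I_n) \sum_(s : 'I_n | s != r) `|Z l r s| ^+ 2).
Proof.
move=> k2n; have N_ge0 : 0 <= ((n - 2 * k)`!)%:R / (n`!)%:R :> C by rewrite divr_ge0 ?ler0n.
rewrite /gnhaf normrM ger0_norm //; apply: le_trans (ler_wpM2l N_ge0 (norm_hafsum_le Z)) _.
rewrite card_ord mulrA.
have -> : ((n - 2 * k)`!)%:R / (n`!)%:R * (n ^_ (2 * k))%:R = 1 :> C.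
  by rewrite mulrAC -natrM mulnC ffact_fact // divff // pnatr_eq0 -lt0n fact_gt0.
rewrite mul1r.
by under eq_bigr do rewrite offdiag_mean_sqT card_ord.
Qed.

Lemma gnhaf_symmetrize (C : numClosedFieldType) (k n : nat) (Z : 'I_k -> 'I_n -> 'I_n -> C) :
  gnhaf Z = gnhaf (fun l => symmetrize (Z l)).
Proof. by congr (_ * _); apply: hafsum_symmetrize. Qed.

Lemma sqr_norm_half_add_le (C : numFieldType) (x y : C) :
  `|(x + y) / 2| ^+ 2 <= (`|x| ^+ 2 + `|y| ^+ 2) / 2.
Proof.
have x_ge0 := normr_ge0 x; have y_ge0 := normr_ge0 y.
apply: le_trans (_ : ((`|x| + `|y|) / 2) ^+ 2 <= _).
  rewrite lerXn2r ?qualifE /= ?divr_ge0 ?addr_ge0 ?ler0n //.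
  by rewrite normf_div normr_nat ler_wpM2r ?invr_ge0 ?ler0n // ler_normD.
rewrite -subr_ge0 (_ : _ - _ = (`|x| - `|y|) ^+ 2 / 4); last by field.
by rewrite divr_ge0 ?ler0n // -realEsqr rpredB ?ger0_real.
Qed.

Lemma sum_offdiag_symmetrize_le (C : numFieldType) (T : finType) (g : T -> T -> C) :
  \sum_r \sum_(s | s != r) `|symmetrize g r s| ^+ 2
  <= \sum_r \sum_(s | s != r) `|g r s| ^+ 2.
Proof.
have transpose : \sum_r \sum_(s | s != r) `|g s r| ^+ 2
                 = \sum_r \sum_(s | s != r) `|g r s| ^+ 2.
  rewrite (exchange_big_dep predT) //=; apply: eq_bigr => r _.
  by apply: eq_bigl => s; rewrite eq_sym.
apply: le_trans (_ : _ <= (\sum_r \sum_(s | s != r) `|g r s| ^+ 2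
                          + \sum_r \sum_(s | s != r) `|g s r| ^+ 2) / 2) _.
  rewrite -big_split mulr_suml; apply: ler_sum => r _.
  rewrite -big_split mulr_suml; apply: ler_sum => s _.
  exact: sqr_norm_half_add_le.
by rewrite transpose mulrDl -splitr.
Qed.

Theorem mainTheorem7 (C : numClosedFieldType) (k n : nat)
    (hn : (2 <= n)%N) (hk0 : (0 < k)%N) (hk : (k <= n./2)%N)
    (Z : 'I_k -> 'I_n -> 'I_n -> C) :
  `|gnhaf Z|
    <= \prod_(l < k) sqrtC ((n * (n - 1))%:R^-1 *
         \sum_(r : 'I_n) \sum_(s : 'I_n | s != r)
            `|(Z l r s + Z l s r) / 2%:R| ^+ 2)
  /\
  \prod_(l < k) sqrtC ((n * (n - 1))%:R^-1 *
         \sum_(r : 'I_n) \sum_(s : 'I_n | s != r)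
            `|(Z l r s + Z l s r) / 2%:R| ^+ 2)
    <= \prod_(l < k) sqrtC ((n * (n - 1))%:R^-1 *
         \sum_(r : 'I_n) \sum_(s : 'I_n | s != r) `|Z l r s| ^+ 2).
Proof.
have k2n : (2 * k <= n)%N by rewrite mul2n -geq_half_double.
split; first by rewrite gnhaf_symmetrize; exact: norm_gnhaf_le.
apply: ler_prod => l _.
have mean_ge0 (g : 'I_n -> 'I_n -> C) :
    0 <= (n * (n - 1))%:R^-1 * \sum_(r : 'I_n) \sum_(s : 'I_n | s != r) `|g r s| ^+ 2.
  rewrite mulr_ge0 ?invr_ge0 ?ler0n // sumr_ge0 // => r _.
  by rewrite sumr_ge0 // => s _; rewrite exprn_ge0.
rewrite sqrtC_ge0 (mean_ge0 (symmetrize (Z l))) ler_sqrtC ?qualifE /= ?mean_ge0 //.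
by rewrite ler_wpM2l ?invr_ge0 ?ler0n // (sum_offdiag_symmetrize_le (Z l)).
Qed.
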